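(* Let $F$ be a non-archimedean local field, $E/F$ a finite field extension, and $V$ a finite-dimensional $E$-vector space. Put $G=\mathrm{Aut}_F(V)$ and $G_E=\mathrm{Aut}_E(V)$. Identify the Bruhat–Tits building $X_E$ of $G_E$ with its image $j(X_E)$ in the building $X_F$ of $G$, where $j$ is the unique $G_E$-equivariant affine map $X_E\to X_F$. If two simplices of $X_E$ are conjugate under the action of $G$, then they are conjugate under the action of $G_E$. *)

From Stdlib Require Import Rdefinitions Rbasic_fun ZArith.
From HB Require Import structures.
From mathcomp Require Import all_boot all_order all_algebra all_field.
Set Implicit Arguments. Unset Strict Implicit. Unset Printing Implicit Defensive.
Import GRing.Theory.
Local Open Scope ring_scope.

(* A normalized discrete valuation v : F -> Z (its value at 0, i.e. +oo,
   is encoded by the conditions only being imposed on nonzero elements). *)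
Definition is_dval (F : fieldType) (v : F -> Z) : Prop :=
  [/\ (forall x y : F, x != 0 -> y != 0 -> v (x * y)%R = Z.add (v x) (v y)),
      (forall x y : F, x != 0 -> y != 0 -> (x + y)%R != 0 ->
         Z.le (Z.min (v x) (v y)) (v (x + y)%R))
    & (exists pi : F, pi != 0 /\ v pi = Z.one)].

Definition inO (F : fieldType) (v : F -> Z) (x : F) : Prop :=
  x = 0 \/ Z.le Z.zero (v x).

Definition vclose (F : fieldType) (v : F -> Z) (k : Z) (x y : F) : Prop :=
  x = y \/ Z.le k (v (x - y)%R).

Definition vcomplete (F : fieldType) (v : F -> Z) : Prop :=
  forall a : nat -> F,
    (forall k : Z, exists N : nat, forall m n : nat, (N <= m)%N -> (N <= n)%N ->
        vclose v k (a m) (a n)) ->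
    exists l : F, forall k : Z, exists N : nat, forall n : nat, (N <= n)%N ->
        vclose v k (a n) l.

Definition finite_residue (F : fieldType) (v : F -> Z) : Prop :=
  exists s : seq F, (forall r, r \in s -> inO v r) /\
    forall x, inO v x -> exists r, r \in s /\ vclose v Z.one x r.

Definition nonarch_local_field (F : fieldType) (v : F -> Z) : Prop :=
  [/\ is_dval v, vcomplete v & finite_residue v].

(* vE : E -> R is a (real-valued) valuation on E extending v. Over a complete
   F it exists and is unique. *)
Definition extends_val (F : fieldType) (v : F -> Z) (E : fieldExtType F)
    (vE : E -> R) : Prop :=
  [/\ (forall x y : E, x != 0 -> y != 0 -> vE (x * y)%R = Rplus (vE x) (vE y)),
      (forall x y : E, x != 0 -> y != 0 -> (x + y)%R != 0 ->
         Rle (Rmin (vE x) (vE y)) (vE (x + y)%R))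
    & (forall a : F, a != 0 -> vE (a%:A) = IZR (v a))].

(* extended reals R U {+oo}; None = +oo *)
Definition geER (o : option R) (r : R) : Prop :=
  match o with None => True | Some a => Rle r a end.
Definition addER (c : R) (o : option R) : option R := option_map (Rplus c) o.

(* Splittable E-norm on V (Goldman-Iwahori / Bruhat-Tits):
   alpha x = +oo iff x = 0, alpha (x+y) >= min (alpha x) (alpha y),
   alpha (l x) = vE l + alpha x, and there is an E-basis (e_i) with
   alpha (sum c_i e_i) = min_i (vE c_i + alpha e_i). *)
Definition isENorm (F : fieldType) (E : fieldExtType F) (vE : E -> R)
    (V : vectType E) (alpha : V -> option R) : Prop :=
  [/\ (forall x, alpha x = None <-> x = 0),
      (forall x y r, geER (alpha x) r -> geER (alpha y) r -> geER (alpha (x + y)%R) r),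
      (forall (l : E) (x : V), l != 0 -> alpha (l *: x) = addER (vE l) (alpha x))
    & (exists (n : nat) (e : 'I_n -> V),
        (forall x : V, exists! c : {ffun 'I_n -> E}, x = \sum_(i < n) c i *: e i) /\
        (forall (c : {ffun 'I_n -> E}) (r : R),
           geER (alpha (\sum_(i < n) c i *: e i)) r <->
           (forall i, c i = 0 \/ geER (addER (vE (c i)) (alpha (e i))) r)))].

Definition latt (E : fieldType) (V : vectType E) (alpha : V -> option R)
    (L : V -> Prop) : Prop :=
  exists r : R, forall x, L x <-> geER (alpha x) r.

(* The facet (open simplex) of X_E containing [alpha]: the E-norms defining
   the same lattice chain (this set is stable under translation, so it is a
   facet of X_E = {E-norms}/R viewed as a translation-stable set of norms).
   Via j (inclusion of E-norms into F-norms, vE extending v) it is also a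
   subset of X_F. *)
Definition facetE (F : fieldType) (E : fieldExtType F) (vE : E -> R)
    (V : vectType E) (alpha : V -> option R) : (V -> option R) -> Prop :=
  fun gamma => isENorm vE gamma /\ forall L, latt alpha L <-> latt gamma L.

Definition F_aut (F : fieldType) (E : fieldExtType F) (V : vectType E)
    (g : V -> V) : Prop :=
  [/\ (forall x y, g (x + y)%R = (g x + g y)%R),
      (forall (a : F) (x : V), g ((a%:A : E) *: x) = (a%:A : E) *: g x)
    & bijective g].

Definition E_aut (E : fieldType) (V : vectType E) (g : V -> V) : Prop :=
  [/\ (forall x y, g (x + y)%R = (g x + g y)%R),
      (forall (l : E) (x : V), g (l *: x) = l *: g x)
    & bijective g].

From Stdlib Require Import Rdefinitions Rbasic_fun ZArith.
From Stdlib Require Import RIneq Lra Classical ClassicalEpsilon FunctionalExtensionality PropExtensionality.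
From HB Require Import structures.
From mathcomp Require Import all_boot all_order all_algebra all_field.
From mathcomp Require Import zify.
Set Implicit Arguments. Unset Strict Implicit. Unset Printing Implicit Defensive.
Import GRing.Theory.
Local Open Scope ring_scope.

(* The facet of a splittable E-norm is determined by its lattice chain, so g
   conjugates facets exactly when beta o g is an E-norm with the lattice chain
   of alpha. Then g is an additive isometry from beta o g to beta, and it
   suffices to replace it by an E-linear isometry h. For a splittable E-norm N
   with splitting basis e and r real, the quotient {N >= r} / {N > r} has
   q ^ m(r) elements, where q is the cardinality of the residue field of E
   (finite, as it is finite dimensional over that of F) and m(r) is the number
   of i with N(e_i) = r mod vE(E^x). An additive isometry preserves these
   cardinalities, so two splitting bases have the same values mod vE(E^x),
   with multiplicities; rescaling and permuting one basis onto the other gives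
   the E-linear isometry h. *)

Lemma exists_argmin_ord (n : nat) (P : 'I_n -> Prop) (f : 'I_n -> R) :
  (exists i, P i) -> exists i0, P i0 /\ forall i, P i -> Rle (f i0) (f i).
Proof.
move=> [w Pw].
suff H k : (k <= n)%N -> exists i0, P i0 /\
    forall i : 'I_n, (i < k)%N -> P i -> Rle (f i0) (f i).
  by have [i0 [P0 H0]] := H n (leqnn n); exists i0; split=> // i; apply: H0.
elim: k => [_|k IH kn]; first by exists w.
have [i0 [P0 H0]] := IH (ltnW kn).
pose j := Ordinal kn.
have [[Pj lt_j]|not_better] := classic (P j /\ Rlt (f j) (f i0)).
  exists j; split=> // i; rewrite ltnS leq_eqVlt => /orP[/eqP ei|ik] Pi.
    by rewrite (_ : i = j); [apply: Rle_refl|apply: val_inj].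
  by apply: Rlt_le; apply: Rlt_le_trans lt_j (H0 i ik Pi).
exists i0; split=> // i; rewrite ltnS leq_eqVlt => /orP[/eqP ei|ik] Pi; last exact: H0.
have eij : i = j by apply: val_inj.
by rewrite eij in Pi *; apply: Rnot_lt_le => hlt; apply: not_better.
Qed.

Lemma exists_transversal (T : eqType) (eqv : T -> T -> Prop)
    (eqv_refl : forall x, eqv x x) (eqv_sym : forall x y, eqv x y -> eqv y x)
    (d : T) (s : seq T) :
  exists s', [/\ {subset s' <= s},
    (forall x, x \in s -> exists2 y, y \in s' & eqv x y) &
    (forall i j, (i < size s')%N -> (j < size s')%N ->
       eqv (nth d s' i) (nth d s' j) -> i = j)].
Proof.
elim: s => [|x s [s' [sub_s' cover_s' uniq_s']]]; first by exists [::].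
have [[y ys exy]|new_x] := classic (exists2 y, y \in s' & eqv x y).
  exists s'; split=> [z /sub_s'|z|//]; first by rewrite inE orbC => ->.
  by rewrite inE => /orP[/eqP->|/cover_s' //]; exists y.
exists (x :: s'); split.
- by move=> z; rewrite !inE => /orP[->//|/sub_s' ->]; rewrite orbT.
- move=> z; rewrite inE => /orP[/eqP->|/cover_s' [y ys ezy]].
    by exists x; rewrite ?mem_head.
  by exists y; rewrite // inE ys orbT.
case=> [|i] [|j] //= hi hj e.
- by case: new_x; exists (nth d s' j); first exact: mem_nth.
- by case: new_x; exists (nth d s' i); [exact: mem_nth|exact: eqv_sym].
- by congr S; apply: uniq_s'.
Qed.

Definition propb (P : Prop) : bool :=
  if excluded_middle_informative P then true else false.

Lemma propbP (P : Prop) : propb P <-> P.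
Proof. by rewrite /propb; case: excluded_middle_informative. Qed.

Lemma card_predE (T : finType) (P : pred T) : #|[pred i | P i]| = count P (enum T).
Proof. by rewrite enumT cardE /enum_mem size_filter. Qed.

Section ClassMatching.
Variables (T : eqType) (t0 : T) (c : T -> T -> Prop).
Hypothesis c_refl : forall x, c x x.
Hypothesis c_sym : forall x y, c x y -> c y x.
Hypothesis c_trans : forall x y z, c x y -> c y z -> c x z.

Let rep (x : T) : T := epsilon (inhabits t0) (fun z => c z x).

Let rep_c x : c (rep x) x.
Proof. by apply: (epsilon_spec (inhabits t0) (fun z => c z x)); exists x. Qed.

Let rep_eq x y : c x y -> rep x = rep y.
Proof.
move=> cxy; rewrite /rep; congr epsilon; apply: functional_extensionality => z.
by apply: propositional_extensionality; split=> czx; [exact: c_trans cxy|exact: c_trans (c_sym cxy)].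
Qed.

Let rep_iff x y : c x y <-> rep x = rep y.
Proof.
split=> [|e]; first exact: rep_eq.
by apply: c_trans (c_sym (rep_c x)) _; rewrite e; apply: rep_c.
Qed.

Let card_class n (a : 'I_n -> T) x :
  #|[pred i | propb (c (a i) (rep x))]| = count_mem (rep x) [seq rep (a i) | i <- enum 'I_n].
Proof.
rewrite count_map card_predE; apply: eq_count => i /=.
apply/idP/idP => [/propbP/rep_eq->|/eqP e]; first by rewrite (rep_eq (rep_c x)).
by apply/propbP/rep_iff; rewrite e (rep_eq (rep_c x)).
Qed.

Lemma match_classes n1 n2 (a : 'I_n1 -> T) (b : 'I_n2 -> T) :
  (forall r, #|[pred i | propb (c (a i) r)]| = #|[pred j | propb (c (b j) r)]|) ->
  n1 = n2 /\ exists2 sg : 'I_n1 -> 'I_n2, injective sg & forall i, c (a i) (b (sg i)).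
Proof.
move=> same_count.
pose A := [seq rep (a i) | i <- enum 'I_n1].
pose B := [seq rep (b j) | j <- enum 'I_n2].
have pAB : perm_eq A B.
  apply/allP => x; rewrite mem_cat => /orP[] /mapP [i _ ->];
    by apply/eqP; rewrite -!card_class same_count.
have sz : n1 = n2.
  by have := perm_size pAB; rewrite !size_map -!enumT !size_enum_ord.
split=> //.
have [Is pIs eA] := perm_iotaP t0 pAB.
have szIs : size Is = n1 by rewrite -(size_map (nth t0 B)) -eA size_map size_enum_ord.
have uIs : uniq Is by rewrite (perm_uniq pIs) iota_uniq.
have lt (i : 'I_n1) : (nth 0%N Is i < n2)%N.
  have : nth 0%N Is i \in iota 0 (size B).
    by rewrite -(perm_mem pIs); apply: mem_nth; rewrite szIs.
  by rewrite mem_iota add0n size_map size_enum_ord.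
exists (fun i => Ordinal (lt i)).
  move=> i j [] e; apply: val_inj => /=.
  by apply/eqP; rewrite -(nth_uniq 0%N _ _ uIs) ?szIs ?e.
move=> i; apply/rep_iff.
have : nth t0 A i = nth t0 [seq nth t0 B i | i <- Is] i by rewrite -eA.
rewrite (nth_map i) ?size_enum_ord // nth_ord_enum (nth_map 0%N) ?szIs //.
rewrite (nth_map (Ordinal (lt i))) ?size_enum_ord //.
by rewrite (_ : nth _ _ _ = Ordinal (lt i)) //; apply: val_inj; rewrite /= nth_enum_ord.
Qed.

End ClassMatching.

HB.instance Definition _ := hasDecEq.Build R (compareP Req_dec_T).

(** * Valuation ring and residue field of E *)

Section ValuedExtension.
Variables (F : fieldType) (v : F -> Z) (E : fieldExtType F) (vE : E -> R).
Hypothesis hvE : extends_val v vE.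

Definition inOE (x : E) := x = 0 \/ Rle R0 (vE x).
Definition inPE (x : E) := x = 0 \/ Rlt R0 (vE x).

Lemma vEM x y : x != 0 -> y != 0 -> vE (x * y) = Rplus (vE x) (vE y).
Proof. by case: hvE => h _ _; apply: h. Qed.

Lemma vED x y : x != 0 -> y != 0 -> x + y != 0 -> Rle (Rmin (vE x) (vE y)) (vE (x + y)).
Proof. by case: hvE => _ h _; apply: h. Qed.

Lemma vE_alg a : a != 0 -> vE (a%:A) = IZR (v a).
Proof. by case: hvE => _ _ h; apply: h. Qed.

Lemma alg_neq0 (a : F) : a != 0 -> (a%:A : E) != 0.
Proof. by move=> na; rewrite -[_%:A]/(a *: 1) scaler_eq0 negb_or na oner_neq0. Qed.

Lemma vE1 : vE 1 = R0.
Proof. by have := vEM (oner_neq0 E) (oner_neq0 E); rewrite mulr1; set a := vE 1 => ?; lra. Qed.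

Lemma vEN1 : vE (-1) = R0.
Proof.
have N1_neq0 : (-1 : E) != 0 by rewrite oppr_eq0 oner_neq0.
by have := vEM N1_neq0 N1_neq0; rewrite mulrNN mulr1 vE1 => ?; lra.
Qed.

Lemma vEN x : vE (- x) = vE x.
Proof.
have [->|nx] := eqVneq x 0; first by rewrite oppr0.
by rewrite -mulN1r vEM ?oppr_eq0 ?oner_neq0 // vEN1 Rplus_0_l.
Qed.

Lemma vEV x : x != 0 -> vE (x^-1) = Ropp (vE x).
Proof. by move=> nx; have := vEM nx (invr_neq0 nx); rewrite mulfV // vE1 => ?; lra. Qed.

Lemma inOE0 : inOE 0. Proof. by left. Qed.
Lemma inOE1 : inOE 1. Proof. by right; rewrite vE1; lra. Qed.

Lemma inOEN x : inOE x -> inOE (- x).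
Proof. by case=> [->|h]; [left; rewrite oppr0|right; rewrite vEN]. Qed.
Lemma inPEN x : inPE x -> inPE (- x).
Proof. by case=> [->|h]; [left; rewrite oppr0|right; rewrite vEN]. Qed.

Lemma inOED x y : inOE x -> inOE y -> inOE (x + y).
Proof.
have [->|nx] := eqVneq x 0; first by rewrite add0r.
have [->|ny] := eqVneq y 0; first by rewrite addr0.
case=> [/eqP|hx]; first by rewrite (negbTE nx).
case=> [/eqP|hy]; first by rewrite (negbTE ny).
have [|nxy] := eqVneq (x + y) 0; first by left.
by right; exact: Rle_trans (Rmin_glb _ _ _ hx hy) (vED nx ny nxy).
Qed.

Lemma inPED x y : inPE x -> inPE y -> inPE (x + y).
Proof.
have [->|nx] := eqVneq x 0; first by rewrite add0r.
have [->|ny] := eqVneq y 0; first by rewrite addr0.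
case=> [/eqP|hx]; first by rewrite (negbTE nx).
case=> [/eqP|hy]; first by rewrite (negbTE ny).
have [|nxy] := eqVneq (x + y) 0; first by left.
by right; exact: Rlt_le_trans (Rmin_glb_lt _ _ _ hx hy) (vED nx ny nxy).
Qed.

Lemma inPEB x y : inPE x -> inPE y -> inPE (x - y).
Proof. by move=> hx /inPEN; apply: inPED. Qed.

Lemma inOEM x y : inOE x -> inOE y -> inOE (x * y).
Proof.
have [->|nx] := eqVneq x 0; first by rewrite mul0r; left.
have [->|ny] := eqVneq y 0; first by rewrite mulr0; left.
case=> [/eqP|hx]; first by rewrite (negbTE nx).
by case=> [/eqP|hy]; [rewrite (negbTE ny)|right; rewrite vEM //; lra].
Qed.

Lemma inPE_mull x y : inOE x -> inPE y -> inPE (x * y).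
Proof.
have [->|nx] := eqVneq x 0; first by rewrite mul0r; left.
have [->|ny] := eqVneq y 0; first by rewrite mulr0; left.
case=> [/eqP|hx]; first by rewrite (negbTE nx).
by case=> [/eqP|hy]; [rewrite (negbTE ny)|right; rewrite vEM //; lra].
Qed.

Lemma inPE_mulr x y : inPE x -> inOE y -> inPE (x * y).
Proof. by move=> hx hy; rewrite mulrC; apply: inPE_mull. Qed.

Lemma notin_PE1 : ~ inPE 1.
Proof. by case=> [/eqP|]; [rewrite oner_eq0|rewrite vE1; lra]. Qed.

Section ResidueField.
Variable sF : seq F.
Hypothesis sF_int : forall r, r \in sF -> inOE (r%:A).
Hypothesis sF_cover : forall a : F, inOE (a%:A) -> exists2 r, r \in sF & inPE ((a - r)%:A).

Let alg_mul (a b : F) : (a * b)%:A = a%:A * (b%:A : E).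
Proof. by rewrite mulr_algl scalerA. Qed.

Fixpoint lincomb (as_ : seq F) (ys : seq E) : E :=
  if (as_, ys) is (a :: as', y :: ys') then a *: y + lincomb as' ys' else 0.

Lemma lincombZ c as_ ys : lincomb (map (fun a => c * a) as_) ys = c *: lincomb as_ ys.
Proof.
elim: as_ ys => [|a as_ IH] [|y ys] /=; rewrite ?scaler0 //.
by rewrite IH scalerDr scalerA.
Qed.

Lemma lincombE as_ ys : size as_ = size ys ->
  lincomb as_ ys = \sum_(i < size ys) as_`_i *: ys`_i.
Proof.
elim: ys as_ => [|y ys IH] [|a as_] //=; first by rewrite big_ord0.
by move=> [e]; rewrite big_ord_recl /= IH.
Qed.

(* The residues of [ys] are linearly independent over the residue field of F. *)
Definition residually_free (ys : seq E) :=
  (forall y, y \in ys -> inOE y) /\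
  forall as_ : seq F, size as_ = size ys -> (forall a, a \in as_ -> inOE (a%:A)) ->
    (exists2 a, a \in as_ & ~ inPE (a%:A)) -> ~ inPE (lincomb as_ ys).

Lemma residually_free_free ys : residually_free ys -> free ys.
Proof.
move=> [_ indep].
apply/(@freeP _ _ _ (in_tuple ys)) => k k_rel i; apply/eqP/negP => /negP nki.
have [i0 [ki0 i0_min]] := @exists_argmin_ord _ (fun i => k i != 0)
  (fun i => vE ((k i)%:A)) (ex_intro _ i nki).
pose as_ := [seq k j / k i0 | j <- enum 'I_(size ys)].
have nth_as (j : 'I_(size ys)) : as_`_j = k j / k i0.
  by rewrite (nth_map j) ?size_enum_ord // nth_ord_enum.
have size_as : size as_ = size ys by rewrite size_map size_enum_ord.
apply: (indep as_ size_as).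
- move=> a /mapP [j _ ->].
  have [->|nkj] := eqVneq (k j) 0; first by rewrite mul0r scale0r; left.
  right; have := i0_min j nkj.
  have -> : (k j)%:A = (k i0)%:A * ((k j / k i0)%:A : E) by rewrite -alg_mul mulrC divfK.
  rewrite vEM ?alg_neq0 ?mulf_neq0 ?invr_eq0 // => h.
  by apply: (Rplus_le_reg_l (vE (k i0)%:A)); rewrite Rplus_0_r.
- exists 1; last by rewrite scale1r; apply: notin_PE1.
  by apply/mapP; exists i0; rewrite ?mem_enum ?divff.
- left; rewrite lincombE //.
  under eq_bigr => j _ do rewrite nth_as mulrC -scalerA.
  by rewrite -scaler_sumr k_rel scaler0.
Qed.

Lemma exists_maximal_residually_free :
  exists ys, residually_free ys /\ forall x, inOE x -> ~ residually_free (x :: ys).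
Proof.
set d := \dim (fullv : {vspace E}).
have size_le ys : residually_free ys -> (size ys <= d)%N.
  by move=> /residually_free_free /eqnP <-; apply: dimvS (subvf _).
suff H m ys : residually_free ys -> (d - size ys <= m)%N ->
    exists ys, residually_free ys /\ forall x, inOE x -> ~ residually_free (x :: ys).
  by apply: (H d [::]); rewrite ?subn0 //; split=> // [[|]] // _ _ [a].
elim: m ys => [|m IH] ys free_ys small.
  by exists ys; split=> // x _ /size_le /=; lia.
have [[x [Ox free_xys]]|maximal] := classic (exists x, inOE x /\ residually_free (x :: ys)).
  by apply: (IH (x :: ys) free_xys); have := size_le _ free_xys; rewrite /=; lia.
by exists ys; split=> // x Ox free_xys; apply: maximal; exists x.
Qed.

Fixpoint lift_combinations (ys : seq E) : seq E :=
  if ys is y :: ys' then [seq r *: y + z | r <- sF, z <- lift_combinations ys']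
  else [:: 0].

Lemma lift_combinations_int ys : (forall y, y \in ys -> inOE y) ->
  forall c, c \in lift_combinations ys -> inOE c.
Proof.
elim: ys => [|y ys IH] Oys c /=; first by rewrite inE => /eqP->; left.
move=> /allpairsP [[r z] [/= hr hz ->]].
apply: inOED; last by apply: IH => // w hw; apply: Oys; rewrite inE hw orbT.
by rewrite -mulr_algl; apply: inOEM; [apply: sF_int|apply: Oys; rewrite mem_head].
Qed.

Lemma lift_combinations_cover ys : (forall y, y \in ys -> inOE y) ->
  forall as_, size as_ = size ys -> (forall a, a \in as_ -> inOE (a%:A)) ->
  exists2 c, c \in lift_combinations ys & inPE (lincomb as_ ys - c).
Proof.
elim: ys => [|y ys IH] Oys [|a as_] //= size_as Oas.
  by exists 0; rewrite ?inE ?subr0 //; left.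
have [r hr Mr] := sF_cover (Oas a (mem_head _ _)).
have [||c hc Mc] := IH _ as_ (succn_inj size_as).
- by move=> w hw; apply: Oys; rewrite inE hw orbT.
- by move=> b hb; apply: Oas; rewrite inE hb orbT.
exists (r *: y + c); first by apply/allpairsP; exists (r, c).
rewrite opprD addrACA -scalerBl -mulr_algl.
by apply: inPED => //; apply: inPE_mulr => //; apply: Oys; apply: mem_head.
Qed.

Lemma residue_of_dependent ys x : residually_free ys -> inOE x ->
  ~ residually_free (x :: ys) ->
  exists2 as_, size as_ = size ys /\ (forall a, a \in as_ -> inOE (a%:A))
             & inPE (x - lincomb as_ ys).
Proof.
move=> [Oys free_ys] Ox /not_and_or [|].
  by case=> y; rewrite inE => /orP[/eqP->|/Oys].
move=> /not_all_ex_not [as0 not_free].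
have [size_as0 {}not_free] := imply_to_and _ _ not_free.
have [Oas {}not_free] := imply_to_and _ _ not_free.
have [[b hb unit_b] /NNPP dep] := imply_to_and _ _ not_free; clear not_free.
case: as0 size_as0 Oas hb dep => [|a0 as_] //= [size_as] Oas hb dep.
have Oas' a : a \in as_ -> inOE (a%:A) by move=> ha; apply: Oas; rewrite inE ha orbT.
(* The coefficient a0 of x is a unit, otherwise [ys] alone would be dependent. *)
have [Pa0|unit_a0] := classic (inPE (a0%:A)).
  exfalso; apply: (free_ys as_ size_as Oas').
    move: hb; rewrite inE => /orP[/eqP eb|hb]; last by exists b.
    by rewrite eb in unit_b.
  rewrite (_ : lincomb _ _ = (a0 *: x + lincomb as_ ys) - a0%:A * x).
    by apply: inPEB => //; apply: inPE_mulr.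
  by rewrite mulr_algl addrAC subrr add0r.
have a0_neq0 : a0 != 0 by apply/eqP => a0_0; apply: unit_a0; rewrite a0_0 scale0r; left.
have vE_a0 : vE (a0%:A) = R0.
  case: (Oas a0 (mem_head _ _)) => [/eqP|Oa0]; first by rewrite (negbTE (alg_neq0 a0_neq0)).
  by apply: Rle_antisym => //; apply: Rnot_lt_le => ?; apply: unit_a0; right.
have vE_a0V : vE ((a0^-1)%:A) = R0.
  rewrite -[_%:A]/(in_alg E a0^-1) fmorphV vEV ?alg_neq0 //=.
  by rewrite vE_a0 Ropp_0.
exists (map (fun a => - a0^-1 * a) as_).
  split=> [|a /mapP [b' hb' ->]]; first by rewrite size_map.
  rewrite alg_mul; apply: inOEM; last exact: Oas'.
  by rewrite scaleNr; apply/inOEN; right; rewrite vE_a0V; apply: Rle_refl.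
rewrite lincombZ scaleNr opprK -[x](scale1r) -(mulVf a0_neq0) -scalerA -scalerDr.
by rewrite -mulr_algl; apply: inPE_mull => //; right; rewrite vE_a0V; apply: Rle_refl.
Qed.

Lemma residue_cover : exists cs : seq E, (forall c, c \in cs -> inOE c) /\
  forall x, inOE x -> exists2 c, c \in cs & inPE (x - c).
Proof.
have [ys [free_ys maximal]] := exists_maximal_residually_free.
exists (lift_combinations ys); split; first exact/lift_combinations_int/free_ys.1.
move=> x Ox; have [as_ [size_as Oas] Px] := residue_of_dependent free_ys Ox (maximal x Ox).
have [c hc Pc] := lift_combinations_cover free_ys.1 size_as Oas.
by exists c => //; rewrite -(subrK (lincomb as_ ys) x) -addrA; apply: inPED.
Qed.

Lemma residue_system : exists K (s : 'I_K -> E), [/\ forall k, inOE (s k),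
  forall k k', inPE (s k - s k') -> k = k' &
  forall x, inOE x -> exists k, inPE (x - s k)].
Proof.
have [cs [Ocs cs_cover]] := residue_cover.
have PE_refl x : inPE (x - x) by rewrite subrr; left.
have PE_sym x y : inPE (x - y) -> inPE (y - x) by move=> ?; rewrite -opprB; apply: inPEN.
have [s' [sub_s' cover_s' uniq_s']] := exists_transversal PE_refl PE_sym 0 cs.
exists (size s'), (fun k => nth 0 s' k); split.
- by move=> k; apply/Ocs/sub_s'/mem_nth.
- by move=> k k' h; apply/val_inj/(uniq_s' _ _ (ltn_ord k) (ltn_ord k') h).
- move=> x Ox; have [c hc Pc] := cs_cover x Ox.
  have [y hy Pcy] := cover_s' c hc.
  have y_idx : (index y s' < size s')%N by rewrite index_mem.
  exists (Ordinal y_idx); rewrite /= nth_index //.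
  by rewrite -(subrK c x) -addrA; apply: inPED.
Qed.
End ResidueField.

Lemma local_residue_system : nonarch_local_field v ->
  exists K (s : 'I_K -> E), [/\ forall k, inOE (s k),
    forall k k', inPE (s k - s k') -> k = k',
    forall x, inOE x -> exists k, inPE (x - s k) & (1 < K)%N].
Proof.
case=> _ _ [sF [sF_int sF_cover]].
have sF_intE r : r \in sF -> inOE (r%:A).
  move=> /sF_int [->|vr]; first by rewrite scale0r; left.
  have [->|nr] := eqVneq r 0; first by rewrite scale0r; left.
  by right; rewrite vE_alg //; exact: IZR_le _ _ vr.
have sF_coverE a : inOE (a%:A) -> exists2 r, r \in sF & inPE ((a - r)%:A).
  move=> Oa; have [r [rs close]] : exists r, r \in sF /\ vclose v Z.one a r.
    apply: sF_cover; have [->|na] := eqVneq a 0; first by left.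
    case: Oa => [/eqP|Oa]; first by rewrite (negbTE (alg_neq0 na)).
    by right; apply: le_IZR; rewrite -vE_alg.
  exists r => //; have [->|nd] := eqVneq (a - r) 0; first by rewrite scale0r; left.
  case: close => [ar|vd]; first by rewrite ar subrr eqxx in nd.
  by right; rewrite vE_alg //; apply: Rlt_le_trans Rlt_0_1 (IZR_le _ _ vd).
have [K [s [s_int s_sep s_cover]]] := residue_system sF_intE sF_coverE.
exists K, s; split=> //.
have [k0 P0] := s_cover 0 inOE0.
have [k1 P1] := s_cover 1 inOE1.
have k01 : k0 != k1.
  apply/eqP => ek; apply: notin_PE1.
  by move: (inPEB P1 P0); rewrite ek sub0r opprK addrNK.
rewrite ltnNge; apply: contra k01 => K_le1; apply/eqP/ord_inj.
by have := ltn_ord k0; have := ltn_ord k1; lia.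
Qed.

(** * Splittable norms and their residue quotients *)

Definition gtER (o : option R) (r : R) : Prop :=
  if o is Some a then Rlt r a else True.

Definition val_equiv (x y : R) := exists l : E, l != 0 /\ Rplus (vE l) x = y.

Lemma val_equiv_refl x : val_equiv x x.
Proof. by exists 1; rewrite oner_neq0 vE1 Rplus_0_l. Qed.

Lemma val_equiv_sym x y : val_equiv x y -> val_equiv y x.
Proof.
move=> [l [nl <-]]; exists l^-1; rewrite invr_eq0 vEV //.
by split=> //; set u := vE l; lra.
Qed.

Lemma val_equiv_trans x y z : val_equiv x y -> val_equiv y z -> val_equiv x z.
Proof.
move=> [l [nl <-]] [l' [nl' <-]]; exists (l' * l); rewrite mulf_neq0 // vEM //.
by split=> //; set u := vE l; set w := vE l'; lra.
Qed.

Section Norm.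
Variables (V : vectType E) (N : V -> option R).
Hypothesis hN : isENorm vE N.

Lemma norm_None x : N x = None <-> x = 0.
Proof. by case: hN => h _ _ _; apply: h. Qed.

Lemma norm0 : N 0 = None.
Proof. exact/norm_None. Qed.

Lemma norm_ultra x y r : geER (N x) r -> geER (N y) r -> geER (N (x + y)) r.
Proof. by case: hN => _ h _ _; apply: h. Qed.

Lemma normZ (l : E) x : l != 0 -> N (l *: x) = addER (vE l) (N x).
Proof. by case: hN => _ _ h _; apply: h. Qed.

Lemma normN x : N (- x) = N x.
Proof.
rewrite -scaleN1r normZ ?oppr_eq0 ?oner_neq0 // vEN1.
by case: (N x) => //= a; rewrite Rplus_0_l.
Qed.

Lemma norm_gtD x y r : gtER (N x) r -> gtER (N y) r -> gtER (N (x + y)) r.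
Proof.
case ex: (N x) => [a|]; last by move=> _; rewrite (proj1 (norm_None x) ex) add0r.
case ey: (N y) => [b|]; last by move=> hx _; rewrite (proj1 (norm_None y) ey) addr0 ex.
move=> /= ha hb; have := @norm_ultra x y (Rmin a b); rewrite ex ey /=.
move=> /(_ (Rmin_l a b) (Rmin_r a b)); case: (N (x + y)) => //= c.
exact/Rlt_le_trans/Rmin_glb_lt.
Qed.

Lemma norm_gtB x y r : gtER (N x) r -> gtER (N y) r -> gtER (N (x - y)) r.
Proof. by move=> hx hy; apply: norm_gtD; rewrite ?normN. Qed.

(* [rho] is a system of representatives of {N >= r} / {N > r}. *)
Definition residue_reps (T : finType) (rho : T -> V) r :=
  [/\ forall t, geER (N (rho t)) r,
      forall t t', gtER (N (rho t - rho t')) r -> t = t'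
    & forall x, geER (N x) r -> exists t, gtER (N (x - rho t)) r].

Lemma residue_reps_le (T1 T2 : finType) (rho1 : T1 -> V) (rho2 : T2 -> V) r :
  residue_reps rho1 r -> residue_reps rho2 r -> (#|T1| <= #|T2|)%N.
Proof.
move=> [rho1_ge rho1_sep _] [_ _ rho2_cover].
pose phi t := proj1_sig (constructive_indefinite_description _ (rho2_cover _ (rho1_ge t))).
have phiP t : gtER (N (rho1 t - rho2 (phi t))) r.
  by rewrite /phi; case: constructive_indefinite_description.
apply: (@leq_card _ _ phi) => t t' e; apply: rho1_sep.
have -> : rho1 t - rho1 t' = (rho1 t - rho2 (phi t)) - (rho1 t' - rho2 (phi t')).
  by rewrite e opprB addrA addrNK.
exact: norm_gtB.
Qed.

Lemma residue_reps_card (T1 T2 : finType) (rho1 : T1 -> V) (rho2 : T2 -> V) r :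
  residue_reps rho1 r -> residue_reps rho2 r -> #|T1| = #|T2|.
Proof.
by move=> h1 h2; apply/eqP; rewrite eqn_leq !(residue_reps_le h1 h2, residue_reps_le h2 h1).
Qed.

Section SplittingBasis.
Variables (n : nat) (e : 'I_n -> V).
Hypothesis e_coord : forall x : V, exists! c : {ffun 'I_n -> E}, x = \sum_(i < n) c i *: e i.
Hypothesis e_split : forall (c : {ffun 'I_n -> E}) (r : R),
  geER (N (\sum_(i < n) c i *: e i)) r <->
  (forall i, c i = 0 \/ geER (addER (vE (c i)) (N (e i))) r).

Lemma basis_neq0 i : e i != 0.
Proof.
apply/eqP => ei; have [c [_ c_uniq]] := e_coord 0.
have : [ffun _ => 0] = [ffun j => if j == i then 1 else 0 : E].
  rewrite -(c_uniq [ffun _ => 0]) ?(c_uniq [ffun j => if j == i then 1 else 0]) //.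
  - rewrite (bigD1 i) //= ffunE eqxx scale1r ei add0r big1 // => j /negbTE nj.
    by rewrite ffunE nj scale0r.
  - by rewrite big1 // => j _; rewrite ffunE scale0r.
by move/ffunP/(_ i); rewrite !ffunE eqxx => /eqP; rewrite eq_sym oner_eq0.
Qed.

(* The [R0] branch is junk: basis vectors are nonzero (see [norm_basis]). *)
Definition bval i := if N (e i) is Some a then a else R0.

Lemma norm_basis i : N (e i) = Some (bval i).
Proof.
rewrite /bval; case h: (N (e i)) => [a|] //.
by move: h => /norm_None /eqP; rewrite (negbTE (basis_neq0 i)).
Qed.

Lemma norm_sum_ge (c : 'I_n -> E) r : geER (N (\sum_(i < n) c i *: e i)) r <->
  (forall i, c i = 0 \/ Rle r (Rplus (vE (c i)) (bval i))).
Proof.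
rewrite (eq_bigr (fun i => [ffun i => c i] i *: e i)) => [|i _]; last by rewrite ffunE.
by rewrite e_split; split=> H i; have := H i; rewrite ?ffunE norm_basis.
Qed.

Lemma norm_sum_gt (c : 'I_n -> E) r : gtER (N (\sum_(i < n) c i *: e i)) r <->
  (forall i, c i = 0 \/ Rlt r (Rplus (vE (c i)) (bval i))).
Proof.
split.
  case eX: (N _) => [a|] /= H i.
    have := proj1 (norm_sum_ge c a); rewrite eX /= => /(_ (Rle_refl a)) /(_ i).
    by case=> [->|h]; [left|right; apply: Rlt_le_trans h].
  have [->|nc] := eqVneq (c i) 0; first by left.
  have := proj1 (norm_sum_ge c (Rplus (Rplus (vE (c i)) (bval i)) R1)); rewrite eX /=.
  move=> /(_ I) /(_ i) [/eqP|]; first by rewrite (negbTE nc).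
  by set u := Rplus (vE (c i)) (bval i) => h; exfalso; lra.
move=> H.
have [[i ni]|all0] := classic (exists i, c i <> 0); last first.
  rewrite big1 ?norm0 // => i _; have [->|ni] := eqVneq (c i) 0; first by rewrite scale0r.
  by case: all0; exists i; apply/eqP.
have [i0 [ci0 i0_min]] := @exists_argmin_ord _ (fun i => c i <> 0)
  (fun i => Rplus (vE (c i)) (bval i)) (ex_intro _ i ni).
have r_lt : Rlt r (Rplus (vE (c i0)) (bval i0)) by case: (H i0).
have : geER (N (\sum_(i < n) c i *: e i)) (Rplus (vE (c i0)) (bval i0)).
  apply/norm_sum_ge => j; have [->|nj] := eqVneq (c j) 0; first by left.
  by right; apply: i0_min; apply/eqP.
by case: (N _) => //= a; apply: Rlt_le_trans.
Qed.

Section Counting.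
Variables (K : nat) (s : 'I_K -> E).
Hypothesis s_int : forall k, inOE (s k).
Hypothesis s_sep : forall k k', inPE (s k - s k') -> k = k'.
Hypothesis s_cover : forall x, inOE x -> exists k, inPE (x - s k).
Variable r : R.

Definition hits i := propb (val_equiv (bval i) r).

Definition shift i : E :=
  if excluded_middle_informative (val_equiv (bval i) r) is left H
  then proj1_sig (constructive_indefinite_description _ H) else 1.

Lemma shiftP i : hits i -> shift i != 0 /\ Rplus (vE (shift i)) (bval i) = r.
Proof.
move=> /propbP; rewrite /shift; case: excluded_middle_informative => // H _.
by case: constructive_indefinite_description.
Qed.

Definition hit := {i : 'I_n | hits i}.

Definition reps_coef (t : {ffun hit -> 'I_K}) (i : 'I_n) : E :=
  if (insub i : option hit) is Some j then s (t j) * shift i else 0.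

Definition reps t := \sum_(i < n) reps_coef t i *: e i.

Lemma reps_coef_hit t (j : hit) : reps_coef t (val j) = s (t j) * shift (val j).
Proof. by rewrite /reps_coef valK. Qed.

Lemma reps_ge t : geER (N (reps t)) r.
Proof.
apply/norm_sum_ge => i; rewrite /reps_coef; case: insubP => [j Pi _|_]; last by left.
have [nl <-] := shiftP Pi.
have [->|ns] := eqVneq (s (t j)) 0; first by left; rewrite mul0r.
right; rewrite vEM // Rplus_assoc.
case: (s_int (t j)) => [/eqP|h]; first by rewrite (negbTE ns).
by rewrite -{1}(Rplus_0_l (Rplus _ _)); apply: Rplus_le_compat_r.
Qed.

Lemma reps_sep t t' : gtER (N (reps t - reps t')) r -> t = t'.
Proof.
rewrite /reps -sumrB; under eq_bigr => i _ do rewrite -scalerBl.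
move=> /norm_sum_gt H; apply/ffunP => j; apply: s_sep.
have [nl hl] := shiftP (valP j).
have := H (val j); rewrite !reps_coef_hit -mulrBl.
have [->|nd] := eqVneq (s (t j) - s (t' j)) 0; first by left.
case=> [/eqP|]; first by rewrite mulf_eq0 (negbTE nd) (negbTE nl).
by rewrite vEM // Rplus_assoc hl => h; right; set u := vE _ in h *; lra.
Qed.

Lemma reps_cover x : geER (N x) r -> exists t, gtER (N (x - reps t)) r.
Proof.
move=> x_ge; have [c [xc _]] := e_coord x.
have c_ge : forall i, c i = 0 \/ Rle r (Rplus (vE (c i)) (bval i)).
  by apply/norm_sum_ge; rewrite -xc.
have c_int (j : hit) : inOE (c (val j) / shift (val j)).
  have [nl hl] := shiftP (valP j).
  have [->|nc] := eqVneq (c (val j)) 0; first by rewrite mul0r; left.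
  right; rewrite vEM ?invr_eq0 // vEV //.
  case: (c_ge (val j)) => [/eqP|]; first by rewrite (negbTE nc).
  by move: hl; set u := vE (c _); set w := vE (shift _) => hl h; lra.
pose kf j := proj1_sig (constructive_indefinite_description _ (s_cover (c_int j))).
have kfP j : inPE (c (val j) / shift (val j) - s (kf j)).
  by rewrite /kf; case: constructive_indefinite_description.
exists [ffun j => kf j]; rewrite {1}xc /reps -sumrB.
under eq_bigr => i _ do rewrite -scalerBl.
apply/norm_sum_gt => i; rewrite /reps_coef; case: insubP => [j _ <-|not_hit].
  have [nl hl] := shiftP (valP j).
  have -> : c (val j) - s ([ffun j => kf j] j) * shift (val j)
          = (c (val j) / shift (val j) - s (kf j)) * shift (val j).
    by rewrite ffunE mulrBl divfK.
  have [->|nd] := eqVneq (c (val j) / shift (val j) - s (kf j)) 0.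
    by left; rewrite mul0r.
  case: (kfP j) => [/eqP|h]; first by rewrite (negbTE nd).
  by right; rewrite vEM // Rplus_assoc hl; move: h; set u := vE _ => h; lra.
rewrite subr0; have [->|nc] := eqVneq (c i) 0; first by left.
case: (c_ge i) => [/eqP|h]; first by rewrite (negbTE nc).
right; case: (Rle_lt_or_eq_dec _ _ h) => // eq; move/negP: not_hit; case.
by apply/propbP; exists (c i).
Qed.

Lemma reps_residue_reps : residue_reps reps r.
Proof. by split; [exact: reps_ge|exact: reps_sep|exact: reps_cover]. Qed.

Lemma card_residue_reps (T : finType) (rho : T -> V) :
  residue_reps rho r -> #|T| = (K ^ #|[pred i | hits i]|)%N.
Proof.
move=> rho_reps; rewrite (residue_reps_card rho_reps reps_residue_reps).
by rewrite card_ffun card_ord card_sig.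
Qed.

End Counting.
End SplittingBasis.
End Norm.

(** * Isometries between splittable norms *)

Section Coordinates.
Variables (V : vectType E) (n : nat) (f : 'I_n -> V).
Hypothesis f_coord : forall x : V, exists! c : {ffun 'I_n -> E}, x = \sum_(i < n) c i *: f i.

Definition coords x := proj1_sig (constructive_indefinite_description _ (f_coord x)).

Lemma coordsP x : x = \sum_(i < n) coords x i *: f i /\
  forall c : {ffun 'I_n -> E}, x = \sum_(i < n) c i *: f i -> coords x = c.
Proof. by rewrite /coords; case: constructive_indefinite_description => c []. Qed.

Lemma coordsD x y : coords (x + y) = [ffun i => coords x i + coords y i].
Proof.
apply: (proj2 (coordsP _)); rewrite {1}(proj1 (coordsP x)) {1}(proj1 (coordsP y)).
by rewrite -big_split; apply: eq_bigr => i _; rewrite ffunE scalerDl.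
Qed.

Lemma coordsZ l x : coords (l *: x) = [ffun i => l * coords x i].
Proof.
apply: (proj2 (coordsP _)); rewrite {1}(proj1 (coordsP x)) scaler_sumr.
by apply: eq_bigr => i _; rewrite ffunE scalerA.
Qed.

End Coordinates.

Lemma opt_geER_inj (o1 o2 : option R) : (forall r, geER o1 r <-> geER o2 r) -> o1 = o2.
Proof.
case: o1 => [a|]; case: o2 => [b|] //= H.
- by congr Some; apply: Rle_antisym; [apply/(H a)|apply/(H b)]; apply: Rle_refl.
- by have := proj2 (H (Rplus a R1)) I; lra.
- by have := proj1 (H (Rplus b R1)) I; lra.
Qed.

Section BasisMatching.
Variables (V : vectType E) (B N : V -> option R).
Hypotheses (hB : isENorm vE B) (hN : isENorm vE N).
Variables (n : nat) (e f : 'I_n -> V).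
Hypothesis e_coord : forall x : V, exists! c : {ffun 'I_n -> E}, x = \sum_(i < n) c i *: e i.
Hypothesis e_split : forall (c : {ffun 'I_n -> E}) (r : R),
  geER (B (\sum_(i < n) c i *: e i)) r <->
  (forall i, c i = 0 \/ geER (addER (vE (c i)) (B (e i))) r).
Hypothesis f_coord : forall x : V, exists! c : {ffun 'I_n -> E}, x = \sum_(i < n) c i *: f i.
Hypothesis f_split : forall (c : {ffun 'I_n -> E}) (r : R),
  geER (N (\sum_(i < n) c i *: f i)) r <->
  (forall i, c i = 0 \/ geER (addER (vE (c i)) (N (f i))) r).
Variables (sg : 'I_n -> 'I_n) (lam : 'I_n -> E).
Hypothesis sg_inj : injective sg.
Hypothesis lam_neq0 : forall i, lam i != 0.
Hypothesis lam_shift : forall i, Rplus (vE (lam i)) (bval B e (sg i)) = bval N f i.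

Definition basis_map x := \sum_(i < n) (coords f_coord x i * lam i) *: e (sg i).

Lemma basis_mapD x y : basis_map (x + y) = basis_map x + basis_map y.
Proof.
by rewrite /basis_map coordsD -big_split; apply: eq_bigr => i _; rewrite ffunE mulrDl scalerDl.
Qed.

Lemma basis_mapZ l x : basis_map (l *: x) = l *: basis_map x.
Proof.
rewrite /basis_map coordsZ scaler_sumr; apply: eq_bigr => i _.
by rewrite ffunE -mulrA scalerA.
Qed.

Lemma norm_basis_map x : B (basis_map x) = N x.
Proof.
set c := coords f_coord x.
have [sgi sgK sgKV] := injF_bij sg_inj.
have coord_step i r : (c i * lam i = 0 \/ Rle r (Rplus (vE (c i * lam i)) (bval B e (sg i))))
                   <-> (c i = 0 \/ Rle r (Rplus (vE (c i)) (bval N f i))).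
  rewrite -lam_shift; have [->|nc] := eqVneq (c i) 0; first by rewrite mul0r; split; left.
  rewrite vEM // Rplus_assoc.
  by split=> [[/eqP|]|[/eqP|]]; rewrite ?mulf_eq0 ?(negbTE nc) ?(negbTE (lam_neq0 i)); right.
apply: opt_geER_inj => r.
have -> : basis_map x = \sum_(j < n) (c (sgi j) * lam (sgi j)) *: e j.
  by rewrite (reindex_inj sg_inj); apply: eq_bigr => i _; rewrite sgK.
rewrite (norm_sum_ge hB e_coord e_split) {1}(proj1 (coordsP f_coord x)) -/c.
rewrite (norm_sum_ge hN f_coord f_split); split=> H i.
  by apply/coord_step; have := H (sg i); rewrite sgK.
by rewrite -[in bval B e i](sgKV i); apply/coord_step.
Qed.

Lemma basis_map_E_aut : E_aut basis_map.
Proof.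
have inj : injective basis_map.
  move=> x y hxy; have : basis_map (x - y) = 0.
    by apply: (addIr (basis_map y)); rewrite -basis_mapD addrNK hxy add0r.
  move=> /(norm_None hB); rewrite norm_basis_map => /(norm_None hN) /eqP.
  by rewrite subr_eq0 => /eqP.
have surj y : exists x, basis_map x = y.
  set cy := coords e_coord y.
  exists (\sum_(i < n) (cy (sg i) / lam i) *: f i).
  rewrite /basis_map (proj2 (coordsP _ _) [ffun i => cy (sg i) / lam i]); last first.
    by apply: eq_bigr => i _; rewrite ffunE.
  rewrite {1}(proj1 (coordsP e_coord y)) -/cy [RHS](reindex_inj sg_inj).
  by apply: eq_bigr => i _; rewrite ffunE divfK.
pose inv y := proj1_sig (constructive_indefinite_description _ (surj y)).
have invK y : basis_map (inv y) = y.
  by rewrite /inv; case: constructive_indefinite_description.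
split; [exact: basis_mapD|exact: basis_mapZ|exists inv => [x|//]].
by apply: inj; rewrite invK.
Qed.

End BasisMatching.

Section Isometry.
Variables (V : vectType E) (B N : V -> option R).
Hypotheses (hB : isENorm vE B) (hN : isENorm vE N).
Variable g : V -> V.
Hypothesis gD : forall x y, g (x + y) = g x + g y.
Hypothesis g_surj : forall y, exists x, y = g x.
Hypothesis isometry_g : forall x, N x = B (g x).
Variables (K : nat) (s : 'I_K -> E).
Hypothesis s_int : forall k, inOE (s k).
Hypothesis s_sep : forall k k', inPE (s k - s k') -> k = k'.
Hypothesis s_cover : forall x, inOE x -> exists k, inPE (x - s k).
Hypothesis K_gt1 : (1 < K)%N.

Lemma residue_reps_isometry r (T : finType) (rho : T -> V) :
  residue_reps N rho r -> residue_reps B (g \o rho) r.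
Proof.
have gB x y : g (x - y) = g x - g y.
  by apply/eqP; rewrite eq_sym subr_eq -gD subrK.
move=> [rho_ge rho_sep rho_cover]; split=> [t|t t'|y] /=.
- by rewrite -isometry_g.
- by rewrite -gB -isometry_g; apply: rho_sep.
- have [x ->] := g_surj y; rewrite -isometry_g => /rho_cover [t ht].
  by exists t; rewrite -gB -isometry_g.
Qed.

Theorem E_isometry_of_isometry : exists h : V -> V, E_aut h /\ forall x, B (h x) = N x.
Proof.
have [_ _ _ [n2 [e [e_coord e_split]]]] := hB.
have [_ _ _ [n1 [f [f_coord f_split]]]] := hN.
have same_counts r : #|[pred i | hits N f r i]| = #|[pred j | hits B e r j]|.
  have f_reps := reps_residue_reps hN f_coord f_split s_int s_sep s_cover r.
  have /eqP := card_residue_reps hB e_coord e_split s_int s_sep s_cover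
                 (residue_reps_isometry f_reps).
  by rewrite (card_residue_reps hN f_coord f_split s_int s_sep s_cover f_reps) eqn_exp2l // => /eqP.
have [en [sg sg_inj sg_equiv]] :=
  match_classes R0 val_equiv_refl val_equiv_sym val_equiv_trans same_counts.
subst n2.
have lam_ex i : exists l : E, l != 0 /\ Rplus (vE l) (bval B e (sg i)) = bval N f i.
  exact: val_equiv_sym (sg_equiv i).
pose lam i := proj1_sig (constructive_indefinite_description _ (lam_ex i)).
have lamP i : lam i != 0 /\ Rplus (vE (lam i)) (bval B e (sg i)) = bval N f i.
  by rewrite /lam; case: constructive_indefinite_description.
have lam_neq0 i := proj1 (lamP i).
have lam_shift i := proj2 (lamP i).
exists (basis_map e f_coord sg lam); split.
  exact: (@basis_map_E_aut V B N hB hN n1 e f e_coord e_split f_coord f_split sg lam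
    sg_inj lam_neq0 lam_shift).
exact: norm_basis_map.
Qed.

End Isometry.
End ValuedExtension.

(** * Facets *)

Section Facets.
Variables (F : fieldType) (E : fieldExtType F) (vE : E -> R) (V : vectType E).

Lemma latt_comp (N : V -> option R) (h hinv : V -> V) L :
  cancel h hinv -> cancel hinv h -> latt (N \o h) L <-> latt N (L \o hinv).
Proof.
move=> hK hKV; split=> [[r hr]|[r hr]]; exists r => x /=; first by rewrite hr /= hKV.
by rewrite -hr /= hK.
Qed.

Lemma E_aut_can (h hinv : V -> V) : E_aut h -> cancel h hinv -> cancel hinv h -> E_aut hinv.
Proof.
move=> [hD hZ _] hK hKV; split; last by exists h.
- by move=> x y; apply: (can_inj hK); rewrite hD !hKV.
- by move=> l x; apply: (can_inj hK); rewrite hZ !hKV.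
Qed.

Lemma isENorm_comp (gam : V -> option R) (h : V -> V) :
  E_aut h -> isENorm vE gam -> isENorm vE (gam \o h).
Proof.
move=> h_aut; have [hD hZ [hinv hK hKV]] := h_aut.
have h0 : h 0 = 0 by apply: (addrI (h 0)); rewrite -hD !addr0.
move=> [gam_None gam_ultra gamZ [n [e [e_coord e_split]]]]; split.
- by move=> x /=; rewrite gam_None; split=> [/(congr1 hinv)|->//]; rewrite hK -{1}h0 hK.
- by move=> x y r /= hx hy; rewrite hD; apply: gam_ultra.
- by move=> l x nl /=; rewrite hZ; apply: gamZ.
exists n, (hinv \o e).
have h_sum (c : 'I_n -> E) : h (\sum_(i < n) c i *: hinv (e i)) = \sum_(i < n) c i *: e i.
  by rewrite (big_morph h hD h0); apply: eq_bigr => i _; rewrite hZ hKV.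
split=> [x|c r /=]; last by rewrite h_sum e_split; split=> H i; have := H i; rewrite /= hKV.
have [c [ec c_uniq]] := e_coord (h x).
exists c; split=> [|c' ec']; first by apply: (can_inj hK); rewrite h_sum.
by apply: c_uniq; rewrite ec' h_sum.
Qed.

Lemma facetE_comp (alpha beta : V -> option R) (h : V -> V) :
  E_aut h -> facetE vE alpha (beta \o h) ->
  forall gam, facetE vE beta gam <-> facetE vE alpha (gam \o h).
Proof.
move=> h_aut [_ latt_alpha] gam; have [_ _ [hinv hK hKV]] := h_aut.
have latt_iff : (forall L, latt beta L <-> latt gam L) <->
                (forall L, latt alpha L <-> latt (gam \o h) L).
  split=> H L; first by rewrite latt_alpha !(latt_comp _ _ hK hKV).
  have -> : L = (L \o h) \o hinv by apply: functional_extensionality => y /=; rewrite hKV.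
  by rewrite -!(latt_comp _ _ hK hKV) -latt_alpha.
split=> [[gam_norm /latt_iff]|[gam_norm /latt_iff]]; split=> //; first exact: isENorm_comp.
have -> : gam = (gam \o h) \o hinv by apply: functional_extensionality => y /=; rewrite hKV.
exact: isENorm_comp (E_aut_can h_aut hK hKV) gam_norm.
Qed.

End Facets.

Theorem lemma1p2 (F : fieldType) (v : F -> Z) (hF : nonarch_local_field v)
  (E : fieldExtType F) (vE : E -> R) (hvE : extends_val v vE)
  (V : vectType E) (alpha beta : V -> option R)
  (halpha : isENorm vE alpha) (hbeta : isENorm vE beta)
  (g : V -> V) (hg : F_aut g)
  (hconj : forall gamma : V -> option R,
      facetE vE beta gamma <-> facetE vE alpha (gamma \o g)) :
  exists h : V -> V, E_aut h /\
    forall gamma : V -> option R,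
      facetE vE beta gamma <-> facetE vE alpha (gamma \o h).
Proof.
have [K [s [s_int s_sep s_cover K_gt1]]] := local_residue_system hvE hF.
have beta_g : facetE vE alpha (beta \o g) by apply/hconj; split.
have [gD _ [ginv _ gKV]] := hg.
have g_surj y : exists x, y = g x by exists (ginv y); rewrite gKV.
have [h [h_aut beta_h]] := E_isometry_of_isometry hvE hbeta beta_g.1 gD g_surj
  (fun x => erefl) s_int s_sep s_cover K_gt1.
exists h; split=> //; apply: facetE_comp => //.
by rewrite (_ : beta \o h = beta \o g) //; apply: functional_extensionality.
Qed.
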